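(* Let $k \ge 3$ and $q \ge 0$ be integers with $k$ odd, and let $s \in \{0,1,2\}$ be the unique integer satisfying $s \equiv q + \frac{k-3}{2} \pmod 3$. Then, for any integer $n$ such that \[n \ge \max\left\{k,\frac{k^2}{6} + \frac{q-s}{3} k + s - \frac{1}{2}\right\}\] and any function $f:[n]\to \{-1,1\}$ with $|f([n])| \le q$, there is a $k$-block $B\subseteq[n]$ with $|f(B)|=1$.
   Context: $[n]=\{1,\dots,n\}$; $f(Y)=\sum_{y\in Y}f(y)$; a $k$-block is a set of $k$ consecutive integers. *)

From mathcomp Require Import all_boot all_order all_algebra.
Set Implicit Arguments. Unset Strict Implicit. Unset Printing Implicit Defensive.
Import Order.TTheory GRing.Theory Num.Theory.
Local Open Scope ring_scope.

Definition block_sum (f : nat -> int) (a k : nat) : int :=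
  \sum_(a <= i < a + k) f i.

From mathcomp Require Import all_boot all_order all_algebra.
From mathcomp Require Import zify ring.
Set Implicit Arguments.
Unset Strict Implicit.
Unset Printing Implicit Defensive.
Import Order.TTheory GRing.Theory Num.Theory.

(* Write k = 2t + 3. A k-block with c entries -1 has sum k - 2c, so |f(B)| = 1
   exactly when c is t + 1 or t + 2. Sliding a block by one position changes c
   by at most one; hence if no block has |f(B)| = 1, then either all blocks
   have c <= t or all have c >= t + 3, and replacing f by -f we may assume
   the former. Writing n = mk + r with
   r < k, the remainder is the tail of the last block, so [n] contains at most
   mt + min(r, t) entries -1 and f([n]) >= n - 2(mt + min(r, t)); the bound on
   n (which is exactly jk + t + s + 1 for q + t = 3j + s) makes this exceed
   q. *)

Section WindowCounts.

Variable P : pred nat.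

Lemma count_iota_slide a l :
  (count P (iota a.+1 l) + P a = count P (iota a l) + P (a + l))%N.
Proof.
have e : iota a (1 + l) = iota a (l + 1) by rewrite addnC.
rewrite !iotaD addn1 in e.
by move/(congr1 (count P)): e; rewrite !count_cat /= !addn0 addnC.
Qed.

Lemma count_windows_le a0 N l c :
    (forall a, (a0 <= a)%N -> (a + l <= N)%N -> count P (iota a l) != c.+1) ->
    (count P (iota a0 l) <= c)%N ->
  forall a, (a0 <= a)%N -> (a + l <= N)%N -> (count P (iota a l) <= c)%N.
Proof.
move=> ne_c1 le0; elim=> [|a IHa]; first by rewrite leqn0 => /eqP <-.
rewrite leq_eqVlt ltnS => /orP [/eqP <- //| a0a] aN.
have := IHa a0a (ltnW aN); have := ne_c1 _ (leqW a0a) aN.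
have := count_iota_slide a l.
by case: (P a); case: (P (a + l)) => /=; lia.
Qed.

Lemma count_iota_le_windows a0 m r k t :
    (0 < m)%N -> (r < k)%N ->
    (forall a, (a0 <= a)%N -> (a + k <= a0 + (m * k + r))%N ->
       (count P (iota a k) <= t)%N) ->
  (count P (iota a0 (m * k + r)) <= m * t + minn r t)%N.
Proof.
move=> m_gt0 r_lt_k win.
have full i : (i <= m)%N -> (count P (iota a0 (i * k)) <= i * t)%N.
  elim: i => [|i IHi] le_im; first by rewrite mul0n.
  rewrite mulSnr iotaD count_cat mulSnr leq_add ?IHi ?(ltnW le_im) //.
  apply: win; first exact: leq_addr.
  rewrite -addnA leq_add2l -mulSnr.
  by rewrite (leq_trans (leq_mul le_im (leqnn k))) ?leq_addr.
set b := (a0 + m * k + r - k)%N.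
have last_win : (count P (iota b k) <= t)%N by apply: win; rewrite /b; nia.
have split_last : iota b k = iota b (k - r) ++ iota (a0 + m * k) r.
  have -> : (a0 + m * k = b + (k - r))%N by rewrite /b; nia.
  by rewrite -iotaD subnK ?(ltnW r_lt_k).
rewrite iotaD count_cat; have := full _ (leqnn m).
have := count_size P (iota (a0 + m * k) r); rewrite size_iota.
move: last_win; rewrite split_last count_cat; lia.
Qed.

End WindowCounts.

Local Open Scope ring_scope.

Lemma sum_pm1E (f : nat -> int) (s : seq nat) :
    {in s, forall i, f i = 1 \/ f i = -1} ->
  \sum_(i <- s) f i = (size s)%:Z - (count (fun i => f i < 0) s)%:Z *+ 2.
Proof.
elim: s => [|x s IHs] pm1; first by rewrite big_nil.
rewrite big_cons IHs => [|i si]; last by apply: pm1; rewrite inE si orbT.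
by rewrite /=; case: (pm1 x (mem_head x s)) => ->; lia.
Qed.

Lemma block_sumN (f : nat -> int) a l :
  block_sum (fun i => - f i) a l = - block_sum f a l.
Proof. by rewrite /block_sum sumrN. Qed.

Lemma threshold_gap (t k q s j m r : nat) : k = (2 * t + 3)%N ->
    (q + t = 3 * j + s)%N -> (s < 3)%N ->
    (j * k + t + s + 1 <= m * k + r)%N -> (r < k)%N ->
  (q + 2 * (m * t + minn r t) < m * k + r)%N.
Proof.
move=> -> qtE s_lt3 + r_lt.
have kE x : (x * (2 * t + 3) = 2 * (x * t) + 3 * x)%N by ring.
case: (ltngtP m j) => [m_lt_j | j_lt_m | ->]; rewrite !kE; try lia.
by have := leq_mul m_lt_j (leqnn (2 * t + 3)); rewrite mulSn !kE; lia.
Qed.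

Lemma threshold_ratE (t k q s j : nat) : k = (2 * t + 3)%N ->
    (q + t = 3 * j + s)%N ->
  k%:Q ^+ 2 / 6%:Q + (q%:Q - s%:Q) / 3%:Q * k%:Q + s%:Q - 1 / 2%:Q
    = (j * k + t + s + 1)%N%:Q.
Proof.
move=> -> qtE; have natQ (x : nat) : x%:Q = x%:R :> rat by [].
have -> : q%:Q = (3 * j + s)%N%:Q - t%:Q by rewrite !natQ -qtE natrD addrK.
by rewrite !natQ !(natrD, natrM); field.
Qed.

Section PlusMinusOneBlocks.

Variables (f : nat -> int) (n t k : nat).
Hypothesis pm1 : forall i, (1 <= i <= n)%N -> f i = 1 \/ f i = -1.

Definition count_neg a l := count (fun i => f i < 0) (iota a l).

Lemma block_sum_count a l : (1 <= a)%N -> (a + l <= n.+1)%N ->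
  block_sum f a l = l%:Z - (count_neg a l)%:Z *+ 2.
Proof.
move=> a_ge1 al_le; rewrite /block_sum /index_iota addKn sum_pm1E ?size_iota //.
by move=> i; rewrite mem_iota => /andP [ai il]; apply: pm1; lia.
Qed.

Hypotheses (kE : k = (2 * t + 3)%N) (k_le_n : (k <= n)%N).
Hypothesis no_unit :
  forall a, (1 <= a)%N -> (a + k <= n.+1)%N -> `|block_sum f a k| != 1.

Lemma count_neg_blocks_le : 0 <= block_sum f 1 k ->
  forall a, (1 <= a)%N -> (a + k <= n.+1)%N -> (count_neg a k <= t)%N.
Proof.
move=> first_ge0.
have neg_ne a : (1 <= a)%N -> (a + k <= n.+1)%N -> count_neg a k != t.+1.
  move=> a_ge1 ak_le; apply: contraNneq (no_unit a_ge1 ak_le) => negE.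
  by rewrite block_sum_count // negE kE; apply/eqP; lia.
have neg1 : (count_neg 1 k <= t)%N.
  rewrite -ltnS ltn_neqAle neg_ne // andTb.
  by move: first_ge0; rewrite block_sum_count // kE; lia.
exact: count_windows_le.
Qed.

Lemma no_unit_block_sum_gt q s j :
    (q + t = 3 * j + s)%N -> (s < 3)%N -> (j * k + t + s + 1 <= n)%N ->
  0 <= block_sum f 1 k -> q%:Z < block_sum f 1 n.
Proof.
move=> qtE s_lt3 n_ge first_ge0.
have k_gt0 : (0 < k)%N by rewrite kE addn3.
have total : (count_neg 1 n <= n %/ k * t + minn (n %% k) t)%N.
  rewrite {1}(divn_eq n k); apply: count_iota_le_windows.
  - by rewrite divn_gt0.
  - by rewrite ltn_mod.
  - move=> a a_ge1; rewrite -divn_eq; exact: count_neg_blocks_le.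
rewrite {1}(divn_eq n k) in n_ge.
have := threshold_gap kE qtE s_lt3 n_ge (ltn_pmod n k_gt0).
by rewrite -divn_eq block_sum_count //; lia.
Qed.

End PlusMinusOneBlocks.

Theorem corollary2p4 (k q s n : nat) (f : nat -> int) :
  (3 <= k)%N -> odd k ->
  (s < 3)%N -> s = (q + (k - 3) %/ 2)%N %[mod 3] ->
  (k <= n)%N ->
  (k%:Q ^+ 2 / 6%:Q + (q%:Q - s%:Q) / 3%:Q * k%:Q + s%:Q - 1 / 2%:Q <= n%:Q) ->
  (forall i, (1 <= i <= n)%N -> f i = 1 \/ f i = -1) ->
  `|\sum_(1 <= i < n.+1) f i| <= q%:Z ->
  exists a : nat, [/\ (1 <= a)%N, (a + k - 1 <= n)%N & `|block_sum f a k| = 1].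
Proof.
move=> k_ge3 k_odd s_lt3 s_mod k_le_n threshold pm1 sum_le_q.
set t := ((k - 3) %/ 2)%N in s_mod.
have kE : k = (2 * t + 3)%N by move: (modn2 k); rewrite k_odd /t; lia.
set j := ((q + t) %/ 3)%N.
have qtE : (q + t = 3 * j + s)%N by move: s_mod; rewrite modn_small // /j; lia.
have n_ge : (j * k + t + s + 1 <= n)%N.
  by rewrite -lez_nat -(ler_int rat) -(threshold_ratE kE qtE).
have [/hasP [a] | /hasPn no_unit] :=
  boolP (has (fun a => `|block_sum f a k| == 1) (iota 1 (n.+1 - k))).
  by rewrite mem_iota => /andP [a_ge1 a_lt] /eqP unit; exists a; split; lia.
have {}no_unit a : (1 <= a)%N -> (a + k <= n.+1)%N -> `|block_sum f a k| != 1.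
  by move=> a_ge1 ak_le; apply: no_unit; rewrite mem_iota; lia.
have sumE : \sum_(1 <= i < n.+1) f i = block_sum f 1 n by [].
rewrite sumE in sum_le_q; case: (lerP 0 (block_sum f 1 k)) => [ge0 | lt0].
  by have := no_unit_block_sum_gt pm1 kE k_le_n no_unit qtE s_lt3 n_ge ge0; lia.
have neg_pm1 i : (1 <= i <= n)%N -> - f i = 1 \/ - f i = -1.
  by case/pm1 => ->; [right | left; rewrite opprK].
have neg_no_unit a : (1 <= a)%N -> (a + k <= n.+1)%N ->
    `|block_sum (fun i => - f i) a k| != 1.
  by move=> a_ge1 ak_le; rewrite block_sumN normrN no_unit.
have := no_unit_block_sum_gt neg_pm1 kE k_le_n neg_no_unit qtE s_lt3 n_ge.
by rewrite !block_sumN oppr_ge0 (ltW lt0) => /(_ isT); lia.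
Qed.
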